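(* Let $S$ be a polynomial ring over a field and let $I$, $J \subseteq S$ be ideals that can be written as $I = L_I + Q_I$ and $J = L_J + Q_J$, where (1) $L_I$ and $L_J$ are generated by disjoint sets of variables; (2) $Q_J$ is generated by quadratic monomials, none of which is divisible by a generator of $L_J$; (3) $Q_I \subseteq J$; (4) $Q_J \subseteq I$. Then $I \cap J = L_IL_J + Q_I + Q_J$. *)

From mathcomp Require Import all_boot all_algebra.
From mathcomp Require Import mpoly.
Set Implicit Arguments. Unset Strict Implicit. Unset Printing Implicit Defensive.
Import GRing.Theory.
Local Open Scope ring_scope.

Section IdealDefs.
Variables (n : nat) (R : fieldType).
Local Notation P := {mpoly R[n]}.

Definition is_ideal (I : P -> Prop) : Prop :=
  [/\ I 0, (forall f g, I f -> I g -> I (f + g)) & (forall a f, I f -> I (a * f))].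

Definition ideal_gen (G : P -> Prop) (f : P) : Prop :=
  exists s : seq (P * P), (forall p, p \in s -> G p.2) /\ f = \sum_(p <- s) p.1 * p.2.

Definition ideal_sum (I J : P -> Prop) : P -> Prop :=
  ideal_gen (fun f => I f \/ J f).

Definition ideal_prod (I J : P -> Prop) : P -> Prop :=
  ideal_gen (fun f => exists a b, [/\ I a, J b & f = a * b]).

Definition var_ideal (A : {set 'I_n}) : P -> Prop :=
  ideal_gen (fun f => exists2 i, i \in A & f = 'X_i).

Definition mdivides (g f : P) : Prop := exists q : P, f = q * g.
End IdealDefs.

(** The inclusion from right to left is immediate from Q_I ⊆ J and Q_J ⊆ I.
    Conversely, write f = a + b with a ∈ L_I and b ∈ Q_I; then a = f - b lies
    in L_I ∩ J. Both ideals are generated by monomials, so every monomial u in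
    the support of a is divisible by some x_i (i ∈ A) and by a generator of J:
    either x_j (j ∈ B), and then x_i x_j | u since i ≠ j, so u ∈ L_I L_J; or a
    generator of Q_J, and then u ∈ Q_J. Hence a ∈ L_I L_J + Q_J. *)
From mathcomp Require Import all_boot all_algebra.
From mathcomp Require Import mpoly.
Set Implicit Arguments. Unset Strict Implicit. Unset Printing Implicit Defensive.
Import GRing.Theory.
Local Open Scope ring_scope.

Lemma mlcm_mnm1 n (i j : 'I_n) : i != j -> mlcm U_(i) U_(j) = (U_(i) + U_(j))%MM.
Proof.
move=> neq_ij; apply/mnmP => k; rewrite /mlcm !mnmE.
have [<-|_] := eqVneq i k; first by rewrite eq_sym (negbTE neq_ij).
by case: (j == k).
Qed.

Section Ideals.
Variables (n : nat) (R : fieldType).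
Local Notation P := {mpoly R[n]}.
Implicit Types (G K X Y : P -> Prop) (f g : P).

Lemma ideal_add K f g : is_ideal K -> K f -> K g -> K (f + g).
Proof. by case=> _ + _; apply. Qed.

Lemma ideal_mull K a f : is_ideal K -> K f -> K (a * f).
Proof. by case=> _ _; apply. Qed.

Lemma ideal_mulr K f a : is_ideal K -> K f -> K (f * a).
Proof. by rewrite mulrC; apply: ideal_mull. Qed.

Lemma ideal_sub K f g : is_ideal K -> K f -> K g -> K (f - g).
Proof. by move=> idK Kf Kg; rewrite -mulN1r; apply: ideal_add => //; apply: ideal_mull. Qed.

Lemma ideal_big K (T : eqType) (s : seq T) (F : T -> P) :
  is_ideal K -> (forall x, x \in s -> K (F x)) -> K (\sum_(x <- s) F x).
Proof.
case=> K0 KD _; elim: s => [|x s IHs] Ks; first by rewrite big_nil.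
rewrite big_cons; apply: KD; first by apply: Ks; rewrite mem_head.
by apply: IHs => y ys; apply: Ks; rewrite in_cons ys orbT.
Qed.

Lemma ideal_gen_ideal G : is_ideal (ideal_gen G).
Proof.
split.
- by exists [::]; rewrite big_nil.
- move=> _ _ [s [Gs ->]] [t [Gt ->]]; exists (s ++ t); rewrite big_cat; split=> //.
  by move=> p; rewrite mem_cat => /orP[/Gs|/Gt].
- move=> a _ [s [Gs ->]]; exists [seq (a * p.1, p.2) | p <- s]; split.
    by move=> q /mapP[p sp ->] /=; apply: Gs.
  by rewrite big_map mulr_sumr; apply: eq_bigr => p _; rewrite mulrA.
Qed.

Lemma ideal_gen_mem G g : G g -> ideal_gen G g.
Proof.
move=> Gg; exists [:: (1, g)]; rewrite big_seq1 mul1r; split=> // p.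
by rewrite mem_seq1 => /eqP->.
Qed.

Lemma ideal_gen_min G K f :
  is_ideal K -> (forall g, G g -> K g) -> ideal_gen G f -> K f.
Proof.
move=> idK GK [s [Gs ->]]; apply: ideal_big => // p sp.
by apply: ideal_mull => //; exact/GK/Gs.
Qed.

Lemma ideal_sum_l X Y f : X f -> ideal_sum X Y f.
Proof. by move=> Xf; apply: ideal_gen_mem; left. Qed.

Lemma ideal_sum_r X Y f : Y f -> ideal_sum X Y f.
Proof. by move=> Yf; apply: ideal_gen_mem; right. Qed.

Lemma ideal_sum_min X Y K f : is_ideal K ->
  (forall g, X g -> K g) -> (forall g, Y g -> K g) -> ideal_sum X Y f -> K f.
Proof. by move=> idK XK YK; apply: ideal_gen_min => // g [/XK|/YK]. Qed.

Lemma ideal_sumP X Y f : is_ideal X -> is_ideal Y ->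
  ideal_sum X Y f -> exists a b, [/\ X a, Y b & f = a + b].
Proof.
move=> idX idY.
apply: (@ideal_gen_min _ (fun h => exists a b, [/\ X a, Y b & h = a + b])) => [|g [Xg|Yg]].
- split.
  + by exists 0, 0; rewrite addr0; split; [case: idX | case: idY | ].
  + move=> _ _ [a1 [b1 [Xa1 Yb1 ->]]] [a2 [b2 [Xa2 Yb2 ->]]].
    by exists (a1 + a2), (b1 + b2); rewrite addrACA; split=> //; apply: ideal_add.
  + move=> c _ [a [b [Xa Yb ->]]].
    by exists (c * a), (c * b); rewrite mulrDr; split=> //; apply: ideal_mull.
- by exists g, 0; rewrite addr0; split=> //; case: idY.
- by exists 0, g; rewrite add0r; split=> //; case: idX.
Qed.

Lemma ideal_prod_subl X Y f : is_ideal X -> ideal_prod X Y f -> X f.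
Proof. by move=> idX; apply: ideal_gen_min => // _ [a [b [Xa _ ->]]]; apply: ideal_mulr. Qed.

Lemma ideal_prod_subr X Y f : is_ideal Y -> ideal_prod X Y f -> Y f.
Proof. by move=> idY; apply: ideal_gen_min => // _ [a [b [_ Yb ->]]]; apply: ideal_mull. Qed.

Lemma ideal_msupp K f :
  is_ideal K -> (forall u, u \in msupp f -> K 'X_[u]) -> K f.
Proof.
move=> idK Ku; rewrite (mpolyE f); apply: ideal_big => // u /Ku.
by rewrite -mul_mpolyC; apply: ideal_mull.
Qed.

Definition mono_ideal (Pm : 'X_{1..n} -> Prop) : P -> Prop :=
  ideal_gen (fun g => exists2 m, Pm m & g = 'X_[m]).

Lemma mono_ideal_dvd (Pm : 'X_{1..n} -> Prop) m u :
  Pm m -> (m <= u)%MM -> mono_ideal Pm 'X_[u].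
Proof.
move=> Pmm le_mu; rewrite -(submK le_mu) mpolyXD.
apply: ideal_mull; first exact: ideal_gen_ideal.
by apply: ideal_gen_mem; exists m.
Qed.

Lemma mono_ideal_msupp (Pm : 'X_{1..n} -> Prop) f :
  mono_ideal Pm f -> forall u, u \in msupp f -> exists2 m, Pm m & (m <= u)%MM.
Proof.
move=> [s [Gs ->]] u /msupp_sum_le /flattenP[_ /mapP[p + ->]].
rewrite mem_filter => /andP[_ /Gs[m Pmm ->]].
by rewrite (perm_mem (msuppMX p.1 m)) => /mapP[v _ ->]; exists m => //; apply: lem_addr.
Qed.

Lemma mono_ideal_sub (Pm Qm : 'X_{1..n} -> Prop) f :
  (forall m, Pm m -> Qm m) -> mono_ideal Pm f -> mono_ideal Qm f.
Proof.
move=> PQ; apply: ideal_gen_min => [|_ [m /PQ Qmm ->]]; first exact: ideal_gen_ideal.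
by apply: ideal_gen_mem; exists m.
Qed.

Definition var_mnm (A : {set 'I_n}) (m : 'X_{1..n}) : Prop :=
  exists2 i, i \in A & m = U_(i)%MM.

Lemma var_idealE A f : var_ideal A f <-> mono_ideal (var_mnm A) f.
Proof.
split; apply: ideal_gen_min; do ?exact: ideal_gen_ideal.
  by move=> _ [i Ai ->]; apply: ideal_gen_mem; exists U_(i)%MM => //; exists i.
by move=> _ [_ [i Ai ->] ->]; apply: ideal_gen_mem; exists i.
Qed.

Lemma var_mono_ideal_sum A (Pm : 'X_{1..n} -> Prop) f :
  ideal_sum (var_ideal A) (mono_ideal Pm) f ->
  mono_ideal (fun m => var_mnm A m \/ Pm m) f.
Proof.
apply: ideal_sum_min => [|g /var_idealE|g]; first exact: ideal_gen_ideal.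
  by apply: mono_ideal_sub => m; left.
by apply: mono_ideal_sub => m; right.
Qed.

Lemma var_ideal_cap_sub (A B : {set 'I_n}) (Pm : 'X_{1..n} -> Prop) f :
  [disjoint A & B] -> var_ideal A f -> ideal_sum (var_ideal B) (mono_ideal Pm) f ->
  ideal_sum (ideal_prod (var_ideal A) (var_ideal B)) (mono_ideal Pm) f.
Proof.
move=> disAB /var_idealE /mono_ideal_msupp LAf /var_mono_ideal_sum /mono_ideal_msupp LBQf.
apply: ideal_msupp => [|u fu]; first exact: ideal_gen_ideal.
have [_ [i Ai ->] le_iu] := LAf u fu.
have [m [[j Bj ->]|Pmm] le_mu]:= LBQf u fu; last first.
  by apply: ideal_sum_r; apply: mono_ideal_dvd le_mu.
have neq_ij : i != j by apply: contraTneq Ai => ->; rewrite (disjointFl disAB Bj).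
have le_iju : (U_(i) + U_(j) <= u)%MM by rewrite -mlcm_mnm1 // lem_mlcm le_iu.
rewrite -(submK le_iju) mpolyXD mpolyXD; apply: ideal_mull; first exact: ideal_gen_ideal.
apply/ideal_sum_l/ideal_gen_mem; exists 'X_i, 'X_j.
by split=> //; apply: ideal_gen_mem; [exists i | exists j].
Qed.

End Ideals.

Theorem lemma1p5 (n : nat) (R : fieldType)
  (A B : {set 'I_n})                       (* L_I = (x_i : i in A), L_J = (x_j : j in B) *)
  (QI : {mpoly R[n]} -> Prop)              (* Q_I, an ideal *)
  (M : 'X_{1..n} -> Prop)                  (* quadratic monomials generating Q_J *)
  (hAB : [disjoint A & B])
  (hQI : is_ideal QI)
  (hM : forall m, M m ->
          mdeg m = 2%N /\ (forall j, j \in B -> ~ mdivides 'X_j ('X_[m] : {mpoly R[n]})))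
  (QJ := ideal_gen (fun f : {mpoly R[n]} => exists2 m, M m & f = 'X_[m]))
  (LI := @var_ideal n R A) (LJ := @var_ideal n R B)
  (I := ideal_sum LI QI) (J := ideal_sum LJ QJ)
  (hQIJ : forall f, QI f -> J f)
  (hQJI : forall f, QJ f -> I f) :
  forall f, (I f /\ J f) <-> ideal_sum (ideal_prod LI LJ) (ideal_sum QI QJ) f.
Proof.
have idLI : is_ideal LI by apply: ideal_gen_ideal.
have idLJ : is_ideal LJ by apply: ideal_gen_ideal.
have idI : is_ideal I by apply: ideal_gen_ideal.
have idJ : is_ideal J by apply: ideal_gen_ideal.
move=> f; split => [[If Jf]|Tf].
- have [a [b [LIa QIb ef]]] := ideal_sumP idLI hQI If.
  have Ja : J a.
    have -> : a = f - b by rewrite ef addrK.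
    exact: ideal_sub idJ Jf (hQIJ _ QIb).
  rewrite ef; apply: ideal_add; first exact: ideal_gen_ideal.
    apply: ideal_sum_min (var_ideal_cap_sub hAB LIa Ja); first exact: ideal_gen_ideal.
      exact: ideal_sum_l.
    by move=> g QJg; apply/ideal_sum_r/ideal_sum_r.
  by apply/ideal_sum_r/ideal_sum_l.
- split; apply: ideal_sum_min Tf => // g.
  + by move/(ideal_prod_subl idLI) => LIg; apply: ideal_sum_l.
  + by apply: (ideal_sum_min idI) hQJI => h; apply: ideal_sum_r.
  + by move/(ideal_prod_subr idLJ) => LJg; apply: ideal_sum_l.
  + by apply: (ideal_sum_min idJ hQIJ) => h; apply: ideal_sum_r.
Qed.
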